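(* Let $A,B,C\in\mathfrak{sl}_4(\mathbb R)$ be diagonal. Then $(G_{A,B,C},\varphi)$ satisfies $d\psi=0$ (where $\psi=*\varphi$) if and only if $A=\mathrm{Diag}(a_1,-a_1,a_2,-a_2)$, $B=\mathrm{Diag}(b_1,b_2,-b_1,-b_2)$, $C=\mathrm{Diag}(c_1,c_2,-c_2,-c_1)$ for some $a_i,b_i,c_i\in\mathbb R$. In that case $\Delta\varphi=d^*d\varphi$, $\Delta\psi=d\tau_3=*\Delta\varphi$, and $$\tau_3=\big(-(b_1+b_2)\bar\omega_7+(a_1+a_2)\bar\omega_1\big)\wedge e^2+\big((c_1+c_2)\bar\omega_7-(a_1-a_2)\bar\omega_2\big)\wedge e^1+\big((b_1-b_2)\bar\omega_2-(c_1-c_2)\bar\omega_1\big)\wedge e^7,$$ $$\Delta\varphi=\big((b_1+b_2)^2+(c_1+c_2)^2\big)\omega_7\wedge e^7+\big((b_1-b_2)^2+(a_1-a_2)^2\big)\omega_2\wedge e^2+\big((c_1-c_2)^2+(a_1+a_2)^2\big)\omega_1\wedge e^1,$$ $$\Delta\psi=\big((b_1+b_2)^2+(c_1+c_2)^2\big)\omega_7\wedge e^{12}-\big((b_1-b_2)^2+(a_1-a_2)^2\big)\omega_2\wedge e^{17}+\big((c_1-c_2)^2+(a_1+a_2)^2\big)\omega_1\wedge e^{27}.$$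
   Context: For commuting $A,B,C\in\mathfrak{sl}_4(\mathbb R)$, $\mathfrak g_{A,B,C}$ is the Lie algebra with basis $\{e_1,\dots,e_7\}$ in which $\langle e_7,e_1,e_2\rangle$ is an abelian subalgebra, $\mathfrak n=\langle e_3,\dots,e_6\rangle$ is an abelian ideal, and in the basis $\{e_3,\dots,e_6\}$, $\mathrm{ad}\,e_7|_{\mathfrak n}=A$, $\mathrm{ad}\,e_1|_{\mathfrak n}=B$, $\mathrm{ad}\,e_2|_{\mathfrak n}=C$; $G_{A,B,C}$ is the simply connected Lie group with this Lie algebra, with left-invariant positive 3-form $\varphi=e^{127}+e^{347}+e^{567}+e^{135}-e^{146}-e^{236}-e^{245}$ ($\{e^i\}$ dual basis). The induced metric makes $\{e_1,\dots,e_7\}$ oriented orthonormal; $*$ is its Hodge star, $d^*$ the codifferential and $\Delta=dd^*+d^*d$ the Hodge Laplacian. $\tau_3$ is the torsion 3-form, i.e. the 3-form in the 27-dimensional $G_2$-irreducible component such that $d\varphi=\tau_0\psi+3\tau_1\wedge\varphi+*\tau_3$ with $\tau_0$ a function and $\tau_1$ a 1-form. Notation: $\omega_7=e^{34}+e^{56}$, $\omega_1=e^{35}-e^{46}$, $\omega_2=-e^{36}-e^{45}$, $\bar\omega_7=e^{34}-e^{56}$, $\bar\omega_1=e^{35}+e^{46}$, $\bar\omega_2=e^{45}-e^{36}$. *)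

(* Left-invariant forms on the 7-dimensional Lie group G_{A,B,C}
   are identified with elements of the exterior algebra of g^*, represented by
   their coefficients in the basis e^K (K a subset of {e_1..e_7}, taken in
   increasing order).  Index convention: e_{k+1} <-> (k : 'I_7). *)
From HB Require Import structures.
From mathcomp Require Import all_boot all_order all_algebra.
From mathcomp Require Import reals.
Set Implicit Arguments. Unset Strict Implicit. Unset Printing Implicit Defensive.
Import Order.TTheory GRing.Theory Num.Theory.
Local Open Scope ring_scope.

Notation lform R := {ffun {set 'I_7} -> R^o}.

Section Forms.
Variable R : realType.

Definition eb (K : {set 'I_7}) : lform R := [ffun L : {set 'I_7} => (L == K)%:R].

(* sign of e^I /\ e^J relative to e^{I u J} (number of inversions) *)
Definition sgn_pair (I J : {set 'I_7}) : R :=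
  (-1) ^+ #|[set p : 'I_7 * 'I_7 | [&& p.1 \in I, p.2 \in J & (p.2 < p.1)%N]]|.

Definition wedge (a b : lform R) : lform R :=
  [ffun K : {set 'I_7} => \sum_(I : {set 'I_7}) \sum_(J : {set 'I_7} |
        (I :&: J == set0) && (I :|: J == K)) sgn_pair I J * a I * b J].

(* Hodge star for the metric making e_1..e_7 oriented orthonormal:
   *e^I = sgn(I, I^c) e^{I^c}, so that e^I /\ *e^I = e^{1..7}. *)
Definition hodge (a : lform R) : lform R := [ffun K : {set 'I_7} => sgn_pair (~: K) K * a (~: K)].

Definition Diag4 (x y z w : R) : 'M[R]_4 :=
  diag_mx (\row_(i < 4) nth 0 [:: x; y; z; w] i).

(* position of e_i in n = <e_3,...,e_6> *)
Definition nidx (i : 'I_7) : option 'I_4 :=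
  if (2 <= i)%N && (i <= 5)%N then Some (inord (i - 2)) else None.

(* ad e_7 = A, ad e_1 = B, ad e_2 = C on n (matrices in the basis e_3..e_6,
   columns = images of basis vectors) *)
Definition adm (A B C : 'M[R]_4) (i : 'I_7) : option 'M[R]_4 :=
  if val i == 6%N then Some A else if val i == 0%N then Some B
  else if val i == 1%N then Some C else None.

(* structure constants: [e_i, e_j] = sum_m sc m i j e_m *)
Definition sc (A B C : 'M[R]_4) (m i j : 'I_7) : R :=
  match adm A B C i, nidx j, nidx m with
  | Some M, Some j', Some m' => M m' j' | _, _, _ => 0 end -
  match adm A B C j, nidx i, nidx m with
  | Some M, Some i', Some m' => M m' i' | _, _, _ => 0 end.

Definition pos (K : {set 'I_7}) (i : 'I_7) : nat := #|[set l in K | (l < i)%N]|.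

(* value a(e_m, e_J) with J in increasing order *)
Definition evalm (a : lform R) (m : 'I_7) (J : {set 'I_7}) : R :=
  if m \in J then 0 else sgn_pair [set m] J * a (m |: J).

(* exterior derivative of left-invariant forms (Chevalley-Eilenberg):
   da(x_0..x_k) = sum_{p<q} (-1)^{p+q} a([x_p,x_q], x_0..^p..^q..x_k) *)
Definition dd (A B C : 'M[R]_4) (a : lform R) : lform R :=
  [ffun K : {set 'I_7} => \sum_(i in K) \sum_(j in K | (i < j)%N)
     (-1) ^+ (pos K i + pos K j) *
     \sum_(m : 'I_7) sc A B C m i j * evalm a m (K :\ i :\ j)].

(* codifferential in dimension 7: on k-forms d^* = (-1)^k * d *;
   the result of degree j = k-1 gets sign (-1)^(j+1) *)
Definition dstar (A B C : 'M[R]_4) (a : lform R) : lform R :=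
  [ffun K : {set 'I_7} => (-1) ^+ (#|K|.+1) * hodge (dd A B C (hodge a)) K].

Definition lap (A B C : 'M[R]_4) (a : lform R) : lform R :=
  dd A B C (dstar A B C a) + dstar A B C (dd A B C a).

Definition is_deg (k : nat) (a : lform R) : Prop := forall K : {set 'I_7}, #|K| != k -> a K = 0.

Definition e1 : lform R := eb [set (0 : 'I_7)].
Definition e2 : lform R := eb [set (1 : 'I_7)].
Definition e7 : lform R := eb [set (6 : 'I_7)].
Definition e12 : lform R := wedge e1 e2.
Definition e17 : lform R := wedge e1 e7.
Definition e27 : lform R := wedge e2 e7.

Definition e3 (i j k : 'I_7) : lform R := wedge (eb [set i]) (wedge (eb [set j]) (eb [set k])).
Definition e2f (i j : 'I_7) : lform R := wedge (eb [set i]) (eb [set j]).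

(* phi = e127 + e347 + e567 + e135 - e146 - e236 - e245 *)
Definition phi : lform R :=
  e3 0 1 6 + e3 2 3 6 + e3 4 5 6 + e3 0 2 4 - e3 0 3 5 - e3 1 2 5 - e3 1 3 4.
Definition psi : lform R := hodge phi.

Definition om7 : lform R := e2f 2 3 + e2f 4 5.
Definition om1 : lform R := e2f 2 4 - e2f 3 5.
Definition om2 : lform R := - e2f 2 5 - e2f 3 4.
Definition om7b : lform R := e2f 2 3 - e2f 4 5.
Definition om1b : lform R := e2f 2 4 + e2f 3 5.
Definition om2b : lform R := e2f 3 4 - e2f 2 5.

(* Lambda^3_27 = {g in Lambda^3 | g /\ phi = 0 = g /\ psi} (Bryant); tau3 is the
   component of d phi = tau0 psi + 3 tau1 /\ phi + * tau3 in it. *)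
Definition is_tau3 (A B C : 'M[R]_4) (t3 : lform R) : Prop :=
  [/\ is_deg 3 t3, wedge t3 phi = 0, wedge t3 psi = 0 &
   exists (t0 : R) (t1 : lform R), is_deg 1 t1 /\
     dd A B C phi = t0 *: psi + 3%:R *: wedge t1 phi + hodge t3].

End Forms.

(* Everything is left-invariant, so forms live in the 128-dimensional exterior
   algebra of g^*, and wedge, Hodge star, d, d^* and the Laplacian are explicit
   linear maps whose coefficients are polynomials in the diagonal entries of
   A, B, C.  A form is represented by the table of its 128 coefficients, stored as
   polynomial expressions and indexed by the characteristic vectors of subsets of
   {e_1, ..., e_7}; the operations are evaluated on tables by computation, and each
   identity of the proposition becomes finitely many polynomial identities, closed
   by [ring].  Conversely, for arbitrary diagonal A, B, C six of the coefficients
   of d psi are, up to sign, sums of two diagonal entries of one matrix, and their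
   vanishing is exactly the stated shape of A, B, C. *)

From HB Require Import structures.
From mathcomp Require Import all_boot all_order all_algebra.
From mathcomp Require Import reals.
From mathcomp Require Import ring lra zify.
Import Order.TTheory GRing.Theory Num.Theory.
Local Open Scope ring_scope.

(** * Polynomial expressions *)

Inductive pexpr : Type :=
  | PConst of nat
  | PVar of nat
  | PAdd of pexpr & pexpr
  | PMul of pexpr & pexpr
  | POpp of pexpr.

Fixpoint pexpr_eqb (p q : pexpr) : bool :=
  match p, q with
  | PConst m, PConst n | PVar m, PVar n => m == n
  | PAdd p1 p2, PAdd q1 q2 | PMul p1 p2, PMul q1 q2 =>
      pexpr_eqb p1 q1 && pexpr_eqb p2 q2
  | POpp p1, POpp q1 => pexpr_eqb p1 q1
  | _, _ => false
  end.

Lemma pexpr_eqb_eq p q : pexpr_eqb p q -> p = q.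
Proof.
elim: p q => [m|m|p1 IH1 p2 IH2|p1 IH1 p2 IH2|p1 IH1] [n|n|q1 q2|q1 q2|q1] //=.
- by move/eqP->.
- by move/eqP->.
- by case/andP=> /IH1-> /IH2->.
- by case/andP=> /IH1-> /IH2->.
- by move/IH1->.
Qed.

(* The smart constructors keep equal coefficients syntactically equal in most
   cases, so that few identities are left to [ring]. *)
Definition pzero (p : pexpr) : bool := if p is PConst 0 then true else false.

Definition padd (p q : pexpr) : pexpr :=
  if pzero p then q else if pzero q then p else PAdd p q.

Definition popp (p : pexpr) : pexpr :=
  if pzero p then p else if p is POpp q then q else POpp p.

Definition pmul (p q : pexpr) : pexpr :=
  if pzero p || pzero q then PConst 0 else
  match p, q with
  | PConst 1, _ => q
  | _, PConst 1 => p
  | POpp (PConst 1), _ => popp q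
  | _, POpp (PConst 1) => popp p
  | _, _ => PMul p q
  end.

Definition psignr (n : nat) (p : pexpr) : pexpr := if odd n then popp p else p.

Definition psum {T : Type} (s : seq T) (f : T -> pexpr) : pexpr :=
  foldr (fun i acc => padd (f i) acc) (PConst 0) s.

Section PolynomialEvaluation.
Variables (R : pzRingType) (env : nat -> R).

Fixpoint peval (p : pexpr) : R :=
  match p with
  | PConst n => n%:R
  | PVar n => env n
  | PAdd p q => peval p + peval q
  | PMul p q => peval p * peval q
  | POpp p => - peval p
  end.

Lemma peval_pzero p : pzero p -> peval p = 0.
Proof. by case: p => // -[]. Qed.

Lemma peval_padd p q : peval (padd p q) = peval p + peval q.
Proof.
rewrite /padd; case: ifP => [/peval_pzero->|_]; first by rewrite add0r.
by case: ifP => [/peval_pzero->|_]; rewrite ?addr0.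
Qed.

Lemma peval_popp p : peval (popp p) = - peval p.
Proof.
rewrite /popp; case: ifP => [/peval_pzero->|_]; first by rewrite oppr0.
by case: p => //= q; rewrite opprK.
Qed.

Lemma peval_pmul p q : peval (pmul p q) = peval p * peval q.
Proof.
rewrite /pmul; case: ifP => [/orP[|] /peval_pzero->|_]; rewrite ?mul0r ?mulr0 //.
case: p => [[|[|n]]|n|p1 p2|p1 p2|[[|[|n]]|p1|p1 p2|p1 p2|p1]];
  case: q => [[|[|m]]|m|q1 q2|q1 q2|[[|[|m]]|q1|q1 q2|q1 q2|q1]];
  by rewrite ?peval_popp /= ?mul1r ?mulr1 ?mulN1r ?mulrN1 ?opprK ?oppr0.
Qed.

Lemma peval_psignr n p : peval (psignr n p) = (-1) ^+ n * peval p.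
Proof.
by rewrite /psignr -signr_odd; case: odd; rewrite ?peval_popp ?mulN1r ?mul1r.
Qed.

Lemma peval_psum (T : Type) (s : seq T) (f : T -> pexpr) :
  peval (psum s f) = \sum_(i <- s) peval (f i).
Proof. by elim: s => [|i s IH]; rewrite ?big_nil ?big_cons //= peval_padd IH. Qed.

End PolynomialEvaluation.

Arguments peval {R}.

(** * Subsets of 'I_7 as bit vectors *)

Lemma big_ord_iota (R : Type) (idx : R) (op : R -> R -> R) n
    (P : pred 'I_n.+1) (F : 'I_n.+1 -> R) :
  \big[op/idx]_(i < n.+1 | P i) F i =
  \big[op/idx]_(l <- iota 0 n.+1 | P (inord l)) F (inord l).
Proof.
rewrite -[iota 0 _]/(index_iota 0 n.+1) big_mkord.
by apply: eq_big => [i|i _]; rewrite inord_val.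
Qed.

Lemma card_set_count n (P : pred 'I_n.+1) :
  #|[set i | P i]| = count (fun l => P (inord l)) (iota 0 n.+1).
Proof. by rewrite -sum1dep_card big_ord_iota sum1_count. Qed.

Implicit Types (K I J : {set 'I_7}) (s u : seq bool).

Definition bits_of_set (K : {set 'I_7}) : seq bool := mkseq (fun l => inord l \in K) 7.
Definition set_of_bits (s : seq bool) : {set 'I_7} := [set i : 'I_7 | nth false s i].

Lemma size_bits_of_set K : size (bits_of_set K) = 7%N.
Proof. exact: size_mkseq. Qed.

Lemma nth_bits_of_set K (i : 'I_7) : nth false (bits_of_set K) i = (i \in K).
Proof. by rewrite nth_mkseq ?inord_val. Qed.

Lemma bits_of_setP K s : size s = 7%N -> (forall i : 'I_7, nth false s i = (i \in K)) ->
  bits_of_set K = s.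
Proof.
move=> s7 Ks; apply: (@eq_from_nth _ false); rewrite size_bits_of_set // => l l7.
by rewrite -(inordK l7) nth_bits_of_set Ks.
Qed.

Lemma bits_of_setK : cancel bits_of_set set_of_bits.
Proof. by move=> K; apply/setP => i; rewrite inE nth_bits_of_set. Qed.

Lemma set_of_bitsK s : size s = 7%N -> bits_of_set (set_of_bits s) = s.
Proof. by move=> s7; apply: bits_of_setP => // i; rewrite inE. Qed.

Lemma bits_of_set1 (i : 'I_7) : bits_of_set [set i] = mkseq (fun l => l == i) 7.
Proof.
apply: bits_of_setP => [|j]; first exact: size_mkseq.
by rewrite nth_mkseq // inE.
Qed.

Lemma bits_of_setC K : bits_of_set (~: K) = map negb (bits_of_set K).
Proof.
apply: bits_of_setP => [|i]; first by rewrite size_map size_bits_of_set.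
by rewrite (nth_map false) ?size_bits_of_set // nth_bits_of_set inE.
Qed.

Definition bits_diff s u : seq bool := [seq b.1 && ~~ b.2 | b <- zip s u].

Lemma bits_of_setD K I : bits_of_set (K :\: I) = bits_diff (bits_of_set K) (bits_of_set I).
Proof.
apply: bits_of_setP => [|i]; first by rewrite size_map size1_zip ?size_bits_of_set.
rewrite (nth_map (false, false)) ?size1_zip ?size_bits_of_set //.
by rewrite nth_zip ?size_bits_of_set //= !nth_bits_of_set inE andbC.
Qed.

Lemma bits_of_setD1 K (i : 'I_7) :
  bits_of_set (K :\ i) = set_nth false (bits_of_set K) i false.
Proof.
apply: bits_of_setP => [|j]; first by rewrite size_set_nth size_bits_of_set; apply/maxn_idPr.
by rewrite nth_set_nth /= nth_bits_of_set !inE -val_eqE; case: eqP.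
Qed.

Lemma bits_of_setU1 K (i : 'I_7) :
  bits_of_set (i |: K) = set_nth false (bits_of_set K) i true.
Proof.
apply: bits_of_setP => [|j]; first by rewrite size_set_nth size_bits_of_set; apply/maxn_idPr.
by rewrite nth_set_nth /= nth_bits_of_set !inE -val_eqE; case: eqP.
Qed.

Lemma card_bits K : #|K| = count id (bits_of_set K).
Proof.
have {1}-> : K = [set i | i \in K] by apply/setP => i; rewrite inE.
by rewrite card_set_count /bits_of_set count_map.
Qed.

Definition bits_pos s (i : nat) : nat := count (fun l => nth false s l && (l < i)%N) (iota 0 7).

Definition bits_inv s u : nat := sumn [seq (nth false s a * bits_pos u a)%N | a <- iota 0 7].

Lemma pos_bits K (i : 'I_7) : pos K i = bits_pos (bits_of_set K) i.
Proof.
rewrite /pos card_set_count; apply: eq_in_count => l.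
by rewrite mem_iota add0n => /andP[_ l7]; rewrite nth_mkseq // inordK.
Qed.

Lemma sgn_pair_bits (R : realType) I J :
  sgn_pair R I J = (-1) ^+ bits_inv (bits_of_set I) (bits_of_set J).
Proof.
congr (_ ^+ _); rewrite -sum1dep_card -(pair_big_dep (fun a => a \in I)
  (fun a b => (b \in J) && (b < a)%N) (fun _ _ => 1%N)) /=.
rewrite big_mkcond big_ord_iota /bits_inv sumnE big_map.
apply: eq_big_seq => l.
rewrite mem_iota add0n => /andP[_ l7].
rewrite sum1dep_card -[#|_|]/(pos J (inord l)) pos_bits inordK // nth_mkseq //.
by case: (inord l \in I); rewrite ?mul1n.
Qed.

Fixpoint subbits s : seq (seq bool) :=
  if s is b :: s' then
    [seq false :: u | u <- subbits s'] ++ (if b then [seq true :: u | u <- subbits s'] else [::])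
  else [:: [::]].

Lemma mem_map_cons (b c : bool) u (X : seq (seq bool)) :
  (c :: u \in [seq b :: v | v <- X]) = (c == b) && (u \in X).
Proof.
apply/mapP/andP => [[v vX [-> ->]]|[/eqP -> uX]]; first by rewrite eqxx.
by exists u.
Qed.

Lemma mem_subbits s u : (u \in subbits s) = (size u == size s) && all2 implb u s.
Proof.
have nil_cons b X : ([::] \in [seq b :: v | v <- X]) = false by apply/negbTE/mapP => -[].
elim: s u => [|b s IH] [|c u] //=; rewrite mem_cat.
  by case: b; rewrite !nil_cons.
by case: b; case: c; rewrite !mem_map_cons ?in_nil IH /= ?orbF ?andbF.
Qed.

Lemma uniq_subbits s : uniq (subbits s).
Proof.
have cons_inj (b : bool) : injective (cons b) by move=> u v [].
elim: s => [|b s IH] //=; rewrite cat_uniq (map_inj_uniq (cons_inj _)) IH /=.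
case: b => //=; rewrite (map_inj_uniq (cons_inj _)) IH andbT.
by apply/hasP => -[_ /mapP[u _ ->] /mapP[v _ []]].
Qed.

Lemma all2_map (S T U : Type) (r : S -> T -> bool) (f : U -> S) (g : U -> T) (l : seq U) :
  all2 r (map f l) (map g l) = all (fun x => r (f x) (g x)) l.
Proof. by elim: l => //= x l ->. Qed.

Lemma subset_bits I K : all2 implb (bits_of_set I) (bits_of_set K) = (I \subset K).
Proof.
rewrite all2_map; apply/allP/subsetP => [IK i iI | IK l _]; last exact/implyP/IK.
by move: (IK i); rewrite mem_iota ltn_ord inord_val iI => /(_ isT).
Qed.

Lemma sum_subsets (V : nmodType) K (F : {set 'I_7} -> V) :
  \sum_(I : {set 'I_7} | I \subset K) F I = \sum_(u <- subbits (bits_of_set K)) F (set_of_bits u).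
Proof.
rewrite -[LHS]big_filter -(big_map set_of_bits xpredT); apply/perm_big/uniq_perm.
- exact: filter_uniq (index_enum_uniq _).
- rewrite map_inj_in_uniq ?uniq_subbits // => u v.
  rewrite !mem_subbits size_bits_of_set => /andP[/eqP u7 _] /andP[/eqP v7 _].
  by move/(congr1 bits_of_set); rewrite !set_of_bitsK.
move=> I; rewrite mem_filter mem_index_enum andbT; apply/idP/mapP => [IK|[u]].
  by exists (bits_of_set I); rewrite ?bits_of_setK // mem_subbits subset_bits IK !size_bits_of_set.
by rewrite mem_subbits => /andP[/eqP u7 uK] ->; rewrite -subset_bits set_of_bitsK.
Qed.

(** * Exterior algebra *)

Lemma wedgeE {R : realType} (a b : lform R) K :
  wedge a b K = \sum_(I : {set 'I_7} | I \subset K) sgn_pair R I (K :\: I) * a I * b (K :\: I).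
Proof.
rewrite ffunE [RHS]big_mkcond; apply: eq_bigr => I _; case: ifP => IK.
  apply: big_pred1 => J /=; apply/andP/eqP => [[/eqP IJ /eqP UK] | ->].
    apply/setP => x; move/setP/(_ x): IJ; move/setP/(_ x): UK; rewrite !inE.
    by case: (x \in I); case: (x \in J); case: (x \in K).
  split; apply/eqP/setP => x; rewrite !inE; case xI: (x \in I) => //=.
  by rewrite (subsetP IK).
apply: big_pred0 => J; apply/negbTE/andP => -[_ /eqP UK].
by move: IK; rewrite -UK subsetUl.
Qed.

Lemma wedge0l {R : realType} (b : lform R) : wedge 0 b = 0.
Proof.
apply/ffunP => K; rewrite !ffunE big1 // => I _.
by rewrite big1 // => J _; rewrite ffunE mulr0 mul0r.
Qed.

Lemma is_deg_add {R : realType} {k : nat} {a b : lform R} :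
  is_deg k a -> is_deg k b -> is_deg k (a + b).
Proof. by move=> ha hb K hK; rewrite ffunE ha ?hb ?addr0. Qed.

Lemma is_deg_opp {R : realType} {k : nat} {a : lform R} : is_deg k a -> is_deg k (- a).
Proof. by move=> ha K hK; rewrite ffunE ha ?oppr0. Qed.

Lemma is_deg_scale {R : realType} {k : nat} (c : R) {a : lform R} :
  is_deg k a -> is_deg k (c *: a).
Proof. by move=> ha K hK; rewrite ffunE ha ?scaler0. Qed.

Lemma is_deg_eb {R : realType} K : is_deg #|K| (eb R K).
Proof. by move=> L hL; rewrite ffunE; case: eqP => // LK; rewrite LK eqxx in hL. Qed.

Lemma is_deg_wedge {R : realType} {p q : nat} {a b : lform R} :
  is_deg p a -> is_deg q b -> is_deg (p + q)%N (wedge a b).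
Proof.
move=> ha hb K hK; rewrite ffunE big1 // => I _.
rewrite big1 // => J /andP[/eqP IJ /eqP UK].
have [hI|/ha->] := eqVneq #|I| p; last by rewrite mulr0 mul0r.
rewrite hb ?mulr0 //; apply: contra hK => /eqP hJ.
by rewrite -UK cardsU IJ cards0 subn0 hI hJ.
Qed.

(** * Forms as coefficient tables *)

Inductive table : Type := TLeaf of pexpr | TNode of table & table.

Fixpoint tget (t : table) (s : seq bool) : pexpr :=
  match t, s with
  | TNode l r, b :: s' => tget (if b then r else l) s'
  | TLeaf p, [::] => p
  | _, _ => PConst 0
  end.

Fixpoint tabulate (n : nat) (f : seq bool -> pexpr) : table :=
  if n is n'.+1 then
    TNode (tabulate n' (fun s => f (false :: s))) (tabulate n' (fun s => f (true :: s)))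
  else TLeaf (f [::]).

Lemma tget_tabulate n f s : size s = n -> tget (tabulate n f) s = f s.
Proof. by elim: n f s => [|n IH] f [|b s] //= [sn]; case: b; rewrite IH. Qed.

Definition tbasis (i : nat) : table :=
  tabulate 7 (fun s => if s == mkseq (fun l => l == i) 7 then PConst 1 else PConst 0).
Definition tzero : table := tabulate 7 (fun=> PConst 0).
Definition tadd (a b : table) : table := tabulate 7 (fun s => padd (tget a s) (tget b s)).
Definition topp (a : table) : table := tabulate 7 (fun s => popp (tget a s)).
Definition tscale (p : pexpr) (a : table) : table := tabulate 7 (fun s => pmul p (tget a s)).

Definition twedge (a b : table) : table :=
  tabulate 7 (fun s => psum (subbits s) (fun u =>
    let v := bits_diff s u in psignr (bits_inv u v) (pmul (tget a u) (tget b v)))).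

Definition thodge (a : table) : table :=
  tabulate 7 (fun s => let c := map negb s in psignr (bits_inv c s) (tget a c)).

Definition ad_diag (dA dB dC : seq pexpr) (i : nat) : option (seq pexpr) :=
  if i == 6 then Some dA else if i == 0 then Some dB else if i == 1 then Some dC else None.

Definition diag_entry (d : seq pexpr) (m j : nat) : pexpr :=
  if (m == j) && (2 <= j <= 5)%N then nth (PConst 0) d (j - 2) else PConst 0.

Definition psc (dA dB dC : seq pexpr) (m i j : nat) : pexpr :=
  let ad i j := if ad_diag dA dB dC i is Some d then diag_entry d m j else PConst 0 in
  padd (ad i j) (popp (ad j i)).

Definition pevalm (a : table) (m : nat) s : pexpr :=
  if nth false s m then PConst 0
  else psignr (bits_inv (mkseq (fun l => l == m) 7) s) (tget a (set_nth false s m true)).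

Definition tdd (dA dB dC : seq pexpr) (a : table) : table :=
  tabulate 7 (fun s => psum (iota 0 7) (fun i => if nth false s i then
    psum (iota 0 7) (fun j => if nth false s j && (i < j)%N then
      psignr (bits_pos s i + bits_pos s j) (psum (iota 0 7) (fun m =>
        pmul (psc dA dB dC m i j) (pevalm a m (set_nth false (set_nth false s i false) j false))))
    else PConst 0) else PConst 0)).

Definition tdstar (dA dB dC : seq pexpr) (a : table) : table :=
  let h := thodge (tdd dA dB dC (thodge a)) in
  tabulate 7 (fun s => psignr (count id s).+1 (tget h s)).

Definition tlap (dA dB dC : seq pexpr) (a : table) : table :=
  tadd (tdd dA dB dC (tdstar dA dB dC a)) (tdstar dA dB dC (tdd dA dB dC a)).

Section TableSemantics.
Variables (R : realType) (env : nat -> R).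

Definition tform (t : table) : lform R := [ffun K => peval env (tget t (bits_of_set K))].

Lemma tformE t K : tform t K = peval env (tget t (bits_of_set K)).
Proof. by rewrite ffunE. Qed.

Lemma tform_tabulate f K : tform (tabulate 7 f) K = peval env (f (bits_of_set K)).
Proof. by rewrite tformE tget_tabulate ?size_bits_of_set. Qed.

Lemma tform_basis (i : 'I_7) : tform (tbasis i) = eb R [set i].
Proof.
apply/ffunP => K; rewrite tform_tabulate ffunE -bits_of_set1.
by rewrite (inj_eq (can_inj bits_of_setK)); case: eqP.
Qed.

Lemma tform_zero : tform tzero = 0.
Proof. by apply/ffunP => K; rewrite tform_tabulate ffunE. Qed.

Lemma tform_add a b : tform (tadd a b) = tform a + tform b.
Proof. by apply/ffunP => K; rewrite tform_tabulate !ffunE peval_padd. Qed.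

Lemma tform_opp a : tform (topp a) = - tform a.
Proof. by apply/ffunP => K; rewrite tform_tabulate !ffunE peval_popp. Qed.

Lemma tform_scale p a : tform (tscale p a) = peval env p *: tform a.
Proof. by apply/ffunP => K; rewrite tform_tabulate !ffunE peval_pmul. Qed.

Lemma tform_wedge a b : tform (twedge a b) = wedge (tform a) (tform b).
Proof.
apply/ffunP => K; rewrite wedgeE tform_tabulate peval_psum sum_subsets.
apply: eq_big_seq => u; rewrite mem_subbits size_bits_of_set => /andP[/eqP u7 _].
by rewrite !tformE sgn_pair_bits bits_of_setD set_of_bitsK // peval_psignr peval_pmul mulrA.
Qed.

Lemma tform_hodge a : tform (thodge a) = hodge (tform a).
Proof.
apply/ffunP => K; rewrite tform_tabulate ffunE sgn_pair_bits tformE bits_of_setC.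
by rewrite peval_psignr.
Qed.

Definition pdiag (d : seq pexpr) : 'M[R]_4 :=
  Diag4 (peval env (nth (PConst 0) d 0)) (peval env (nth (PConst 0) d 1))
        (peval env (nth (PConst 0) d 2)) (peval env (nth (PConst 0) d 3)).

Lemma pdiagE d (p q : 'I_4) : pdiag d p q = (p == q)%:R * peval env (nth (PConst 0) d q).
Proof.
rewrite /pdiag /Diag4 !mxE; case: eqP => [->|_]; last by rewrite mulr0n mul0r.
by rewrite mulr1n mul1r; case: q => -[|[|[|[|q]]]].
Qed.

Lemma sc_pdiag dA dB dC (m i j : 'I_7) :
  sc (pdiag dA) (pdiag dB) (pdiag dC) m i j = peval env (psc dA dB dC m i j).
Proof.
have entry_pdiag d (y : 'I_7) :
    match nidx y, nidx m with Some y', Some m' => pdiag d m' y' | _, _ => 0 end =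
    peval env (diag_entry d m y).
  rewrite /nidx /diag_entry; case: ifP => hy; last by rewrite andbF.
  case: ifP => hm; last by case: eqP => // my; rewrite my hy in hm.
  move: hy hm => /andP[y2 y5] /andP[m2 m5].
  rewrite andbT pdiagE -val_eqE /= !inordK ?eqn_sub2rE //; try lia.
  by case: eqP; rewrite ?mul1r ?mul0r.
have adm_pdiag (x y : 'I_7) :
    match adm (pdiag dA) (pdiag dB) (pdiag dC) x, nidx y, nidx m with
    | Some M, Some y', Some m' => M m' y' | _, _, _ => 0 end =
    peval env (if ad_diag dA dB dC x is Some d then diag_entry d m y else PConst 0).
  by rewrite /adm /ad_diag; case: ifP => _; [|case: ifP => _; [|case: ifP]]; rewrite ?entry_pdiag.
by rewrite /sc /psc peval_padd peval_popp !adm_pdiag.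
Qed.

Lemma evalm_tform a (m : 'I_7) J :
  evalm (tform a) m J = peval env (pevalm a m (bits_of_set J)).
Proof.
rewrite /evalm /pevalm nth_bits_of_set; case: ifP => // _.
by rewrite peval_psignr sgn_pair_bits bits_of_set1 tformE bits_of_setU1.
Qed.

Lemma tform_dd dA dB dC a :
  tform (tdd dA dB dC a) = dd (pdiag dA) (pdiag dB) (pdiag dC) (tform a).
Proof.
apply/ffunP => K; rewrite tform_tabulate [RHS]ffunE peval_psum [RHS]big_mkcond big_ord_iota.
apply: eq_big_seq => i; rewrite mem_iota add0n => /andP[_ i7].
rewrite nth_mkseq //; case: ifP => _; last by [].
rewrite peval_psum [RHS]big_mkcond big_ord_iota; apply: eq_big_seq => j.
rewrite mem_iota add0n => /andP[_ j7]; rewrite nth_mkseq // !inordK //.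
case: ifP => _; last by [].
rewrite peval_psignr !pos_bits !inordK //; congr (_ * _).
rewrite peval_psum big_ord_iota; apply: eq_big_seq => m.
rewrite mem_iota add0n => /andP[_ m7].
by rewrite peval_pmul sc_pdiag evalm_tform !bits_of_setD1 !inordK.
Qed.

Lemma tform_dstar dA dB dC a :
  tform (tdstar dA dB dC a) = dstar (pdiag dA) (pdiag dB) (pdiag dC) (tform a).
Proof.
apply/ffunP => K; rewrite tform_tabulate [RHS]ffunE -tform_hodge -tform_dd -tform_hodge.
by rewrite peval_psignr card_bits tformE.
Qed.

Lemma tform_lap dA dB dC a :
  tform (tlap dA dB dC a) = lap (pdiag dA) (pdiag dB) (pdiag dC) (tform a).
Proof.
(* Splitting first prevents [rewrite] from comparing two different tables, which
   it would do by evaluating them. *)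
rewrite tform_add; congr (_ + _); first by rewrite tform_dd tform_dstar.
by rewrite tform_dstar tform_dd.
Qed.

End TableSemantics.

Arguments tform {R}.
Arguments pdiag {R}.

(** * Reflection *)

Inductive fexpr : Type :=
  | FBasis of 'I_7
  | FZero
  | FAdd of fexpr & fexpr
  | FOpp of fexpr
  | FScale of pexpr & fexpr
  | FWedge of fexpr & fexpr
  | FHodge of fexpr
  | FD of seq pexpr & seq pexpr & seq pexpr & fexpr
  | FDstar of seq pexpr & seq pexpr & seq pexpr & fexpr
  | FLap of seq pexpr & seq pexpr & seq pexpr & fexpr.

Fixpoint fcompile (e : fexpr) : table :=
  match e with
  | FBasis i => tbasis i
  | FZero => tzero
  | FAdd a b => tadd (fcompile a) (fcompile b)
  | FOpp a => topp (fcompile a)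
  | FScale p a => tscale p (fcompile a)
  | FWedge a b => twedge (fcompile a) (fcompile b)
  | FHodge a => thodge (fcompile a)
  | FD dA dB dC a => tdd dA dB dC (fcompile a)
  | FDstar dA dB dC a => tdstar dA dB dC (fcompile a)
  | FLap dA dB dC a => tlap dA dB dC (fcompile a)
  end.

Definition all_bits : seq (seq bool) := subbits (nseq 7 true).

Lemma mem_all_bits s : size s = 7%N -> s \in all_bits.
Proof.
move=> s7; rewrite mem_subbits size_nseq s7 eqxx -s7 /=.
by elim: s {s7} => //= b s ->; rewrite implybT.
Qed.

Definition residuals (a b : table) : seq (pexpr * pexpr) :=
  [seq (tget a s, tget b s) | s <- all_bits & ~~ pexpr_eqb (tget a s) (tget b s)].

Section Reflection.
Variables (R : realType) (env : nat -> R).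

Fixpoint finterp (e : fexpr) : lform R :=
  match e with
  | FBasis i => eb R [set i]
  | FZero => 0
  | FAdd a b => finterp a + finterp b
  | FOpp a => - finterp a
  | FScale p a => peval env p *: finterp a
  | FWedge a b => wedge (finterp a) (finterp b)
  | FHodge a => hodge (finterp a)
  | FD dA dB dC a => dd (pdiag env dA) (pdiag env dB) (pdiag env dC) (finterp a)
  | FDstar dA dB dC a => dstar (pdiag env dA) (pdiag env dB) (pdiag env dC) (finterp a)
  | FLap dA dB dC a => lap (pdiag env dA) (pdiag env dB) (pdiag env dC) (finterp a)
  end.

Lemma tform_fcompile e : tform env (fcompile e) = finterp e.
Proof.
elim: e => /= [i||a IHa b IHb|a IHa|p a IHa|a IHa b IHb|a IHa
              |dA dB dC a IHa|dA dB dC a IHa|dA dB dC a IHa].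
- exact: tform_basis.
- exact: tform_zero.
- by rewrite tform_add IHa IHb.
- by rewrite tform_opp IHa.
- by rewrite tform_scale IHa.
- by rewrite tform_wedge IHa IHb.
- by rewrite tform_hodge IHa.
- by rewrite tform_dd IHa.
- by rewrite tform_dstar IHa.
- by rewrite tform_lap IHa.
Qed.

Definition peval_eqs (l : seq (pexpr * pexpr)) : Prop :=
  foldr (fun pq P => peval env pq.1 = peval env pq.2 /\ P) True l.

Lemma finterp_eq_residuals e1 e2 v :
  residuals (fcompile e1) (fcompile e2) = v -> peval_eqs v -> finterp e1 = finterp e2.
Proof.
rewrite -!tform_fcompile => <- eqs; apply/ffunP => K; rewrite !tformE.
have : bits_of_set K \in all_bits by rewrite mem_all_bits ?size_bits_of_set.
move: eqs; rewrite /residuals; elim: all_bits => // s S IH /=.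
case: ifP => [_ /= [eq_s /IH eqS] | /negbFE/pexpr_eqb_eq eq_s /IH eqS];
  rewrite inE => /orP[/eqP->|/eqS] //.
by rewrite eq_s.
Qed.

Definition peval_zeros (l : seq pexpr) : Prop := foldr (fun p P => peval env p = 0 /\ P) True l.

(* Stated with [map (tget (fcompile e))] so that evaluation builds the table once
   rather than once per coefficient. *)
Lemma finterp_eq0_coefs e ss v : finterp e = 0 -> all (fun s => size s == 7%N) ss ->
  map (tget (fcompile e)) ss = v -> peval_zeros v.
Proof.
move=> e0 /allP ss7 <-; elim: ss ss7 => //= s ss IH ss7; split.
  have := tform_fcompile e; rewrite e0 => /ffunP/(_ (set_of_bits s)).
  by rewrite tformE set_of_bitsK ?ffunE //; apply/eqP/ss7/mem_head.
by apply: IH => u us; apply: ss7; rewrite inE us orbT.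
Qed.

End Reflection.

Arguments finterp {R}.

Ltac var_index vars t :=
  lazymatch vars with
  | t :: _ => constr:(0%N)
  | _ :: ?vs => let n := var_index vs t in constr:(n.+1)
  end.

Ltac reify_scalar vars t :=
  lazymatch t with
  | ?x + ?y =>
      let p := reify_scalar vars x in let q := reify_scalar vars y in constr:(PAdd p q)
  | ?x * ?y =>
      let p := reify_scalar vars x in let q := reify_scalar vars y in constr:(PMul p q)
  | ?x ^+ 2 => let p := reify_scalar vars x in constr:(PMul p p)
  | - ?x => let p := reify_scalar vars x in constr:(POpp p)
  | 0 => constr:(PConst 0)
  | ?n%:R => constr:(PConst n)
  | _ => let n := var_index vars t in constr:(PVar n)
  end.

Ltac reify_diag vars M :=
  lazymatch M with
  | Diag4 ?x0 ?x1 ?x2 ?x3 =>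
      let p0 := reify_scalar vars x0 in let p1 := reify_scalar vars x1 in
      let p2 := reify_scalar vars x2 in let p3 := reify_scalar vars x3 in
      constr:([:: p0; p1; p2; p3])
  end.

(* [reify_form vars t] is an [e] such that [finterp (nth 0 vars) e] is convertible
   to [t]. *)
Ltac reify_form vars t :=
  lazymatch t with
  | ?x + ?y =>
      let a := reify_form vars x in let b := reify_form vars y in constr:(FAdd a b)
  | - ?x => let a := reify_form vars x in constr:(FOpp a)
  | 0 => constr:(FZero)
  | ?c *: ?x =>
      let p := reify_scalar vars c in let a := reify_form vars x in constr:(FScale p a)
  | wedge ?x ?y =>
      let a := reify_form vars x in let b := reify_form vars y in constr:(FWedge a b)
  | hodge ?x => let a := reify_form vars x in constr:(FHodge a)
  | dd ?A ?B ?C ?x =>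
      let dA := reify_diag vars A in let dB := reify_diag vars B in
      let dC := reify_diag vars C in let a := reify_form vars x in constr:(FD dA dB dC a)
  | dstar ?A ?B ?C ?x =>
      let dA := reify_diag vars A in let dB := reify_diag vars B in
      let dC := reify_diag vars C in let a := reify_form vars x in constr:(FDstar dA dB dC a)
  | lap ?A ?B ?C ?x =>
      let dA := reify_diag vars A in let dB := reify_diag vars B in
      let dC := reify_diag vars C in let a := reify_form vars x in constr:(FLap dA dB dC a)
  | eb _ [set ?i] => constr:(FBasis i)
  end.

Ltac unfold_forms :=
  rewrite /psi /phi /om7 /om1 /om2 /om7b /om1b /om2b /e12 /e17 /e27 /e3 /e2f /e1 /e2 /e7.

Ltac forms_by_computation vars :=
  unfold_forms;
  lazymatch goal with |- ?l = ?r =>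
    let el := reify_form vars l in
    let er := reify_form vars r in
    let v := eval vm_compute in (residuals (fcompile el) (fcompile er)) in
    apply: (@finterp_eq_residuals _ (nth 0 vars) el er v);
      [vm_compute; reflexivity | cbn [peval_eqs foldr fst snd peval nth]; repeat split; ring]
  end.

Ltac coefficients_eq0 H vars ss :=
  lazymatch type of H with ?l = 0 =>
    let e := reify_form vars l in
    let v := eval vm_compute in (map (tget (fcompile e)) ss) in
    let He := fresh in
    have He : finterp (nth 0 vars) e = 0 := H;
    have := @finterp_eq0_coefs _ (nth 0 vars) e ss v He isT ltac:(vm_compute; reflexivity);
    clear He; cbn [peval_zeros foldr peval nth]
  end.

(** * The diagonal family *)

Definition tau3 {R : realType} (a1 a2 b1 b2 c1 c2 : R) : lform R :=
  wedge (- (b1 + b2) *: om7b R + (a1 + a2) *: om1b R) (e2 R) +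
  wedge ((c1 + c2) *: om7b R - (a1 - a2) *: om2b R) (e1 R) +
  wedge ((b1 - b2) *: om2b R - (c1 - c2) *: om1b R) (e7 R).

Lemma diag_Diag4 (R : realType) (M : 'M[R]_4) :
  is_diag_mx M -> M = Diag4 (M 0 0) (M 1 1) (M 2 2) (M 3 3).
Proof.
move=> /is_diag_mxP Md; apply/matrixP => p q; rewrite /Diag4 !mxE.
case: eqP => [<-|/eqP pq]; last by rewrite mulr0n Md.
by rewrite mulr1n; case: p => -[|[|[|[|p]]]] // hp; congr (M _ _); apply: val_inj.
Qed.

Lemma dpsi_eq0_diag_shape (R : realType) (A B C : 'M[R]_4) :
  is_diag_mx A -> is_diag_mx B -> is_diag_mx C -> dd A B C (psi R) = 0 ->
  exists a1 a2 b1 b2 c1 c2 : R,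
    [/\ A = Diag4 a1 (- a1) a2 (- a2), B = Diag4 b1 b2 (- b1) (- b2)
      & C = Diag4 c1 c2 (- c2) (- c1)].
Proof.
move=> /diag_Diag4 dA /diag_Diag4 dB /diag_Diag4 dC.
rewrite {1}dA {1}dB {1}dC; unfold_forms => H.
(* The coefficients on e^12347, e^12567, e^12357, e^12467, e^12457, e^12367. *)
coefficients_eq0 H
  [:: A 0 0; A 1 1; A 2 2; A 3 3; B 0 0; B 1 1; B 2 2; B 3 3; C 0 0; C 1 1; C 2 2; C 3 3]
  [:: [:: true; true; true; true; false; false; true];
      [:: true; true; false; false; true; true; true];
      [:: true; true; true; false; true; false; true];
      [:: true; true; false; true; false; true; true];
      [:: true; true; false; true; true; false; true];
      [:: true; true; true; false; false; true; true]] => -[A1 [A3 [B2 [B3 [C2 [C3 _]]]]]].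
exists (A 0 0), (A 2 2), (B 0 0), (B 1 1), (C 0 0), (C 1 1).
by split; [rewrite {1}dA | rewrite {1}dB | rewrite {1}dC]; congr Diag4; lra.
Qed.

Section DiagonalCoclosed.
Variables (R : realType) (a1 a2 b1 b2 c1 c2 : R).
Local Notation A := (Diag4 a1 (- a1) a2 (- a2)).
Local Notation B := (Diag4 b1 b2 (- b1) (- b2)).
Local Notation C := (Diag4 c1 c2 (- c2) (- c1)).
Local Notation t3 := (tau3 a1 a2 b1 b2 c1 c2).
Local Ltac by_computation := rewrite /tau3; forms_by_computation [:: a1; a2; b1; b2; c1; c2].

Lemma dpsi_eq0 : dd A B C (psi R) = 0.
Proof. by_computation. Qed.

Lemma dphi_eq_hodge_tau3 : dd A B C (phi R) = hodge t3.
Proof. by_computation. Qed.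

Lemma tau3_wedge_phi : wedge t3 (phi R) = 0.
Proof. by_computation. Qed.

Lemma tau3_wedge_psi : wedge t3 (psi R) = 0.
Proof. by_computation. Qed.

Lemma tau3_deg3 : is_deg 3 t3.
Proof.
have d1 i : is_deg 1 (eb R [set i]) by have := @is_deg_eb R [set i]; rewrite cards1.
have d2 i j : is_deg 2 (e2f R i j) by exact: (is_deg_wedge (d1 i) (d1 j)).
rewrite /tau3 /om7b /om1b /om2b.
by repeat (apply: is_deg_add || apply: is_deg_opp || apply: is_deg_scale
  || apply: (@is_deg_wedge R 2 1) || apply: d2 || apply: d1).
Qed.

Lemma tau3_is_tau3 : is_tau3 A B C t3.
Proof.
split; [exact: tau3_deg3 | exact: tau3_wedge_phi | exact: tau3_wedge_psi |].
exists 0, 0; split; first by move=> K _; rewrite ffunE.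
by rewrite dphi_eq_hodge_tau3 scale0r wedge0l scaler0 !add0r.
Qed.

Lemma lap_phi_dstar : lap A B C (phi R) = dstar A B C (dd A B C (phi R)).
Proof. by_computation. Qed.

Lemma lap_psi_d_tau3 : lap A B C (psi R) = dd A B C t3.
Proof. by_computation. Qed.

Lemma lap_psi_hodge : lap A B C (psi R) = hodge (lap A B C (phi R)).
Proof. by_computation. Qed.

Lemma lap_phiE : lap A B C (phi R) =
  ((b1 + b2) ^+ 2 + (c1 + c2) ^+ 2) *: wedge (om7 R) (e7 R) +
  ((b1 - b2) ^+ 2 + (a1 - a2) ^+ 2) *: wedge (om2 R) (e2 R) +
  ((c1 - c2) ^+ 2 + (a1 + a2) ^+ 2) *: wedge (om1 R) (e1 R).
Proof. by_computation. Qed.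

Lemma lap_psiE : lap A B C (psi R) =
  ((b1 + b2) ^+ 2 + (c1 + c2) ^+ 2) *: wedge (om7 R) (e12 R) -
  ((b1 - b2) ^+ 2 + (a1 - a2) ^+ 2) *: wedge (om2 R) (e17 R) +
  ((c1 - c2) ^+ 2 + (a1 + a2) ^+ 2) *: wedge (om1 R) (e27 R).
Proof. by_computation. Qed.

End DiagonalCoclosed.

Theorem proposition4p14 (R : realType) (A B C : 'M[R]_4) :
  is_diag_mx A -> is_diag_mx B -> is_diag_mx C ->
  \tr A = 0 -> \tr B = 0 -> \tr C = 0 ->
  (dd A B C (psi R) = 0 <->
   exists a1 a2 b1 b2 c1 c2 : R,
     [/\ A = Diag4 a1 (- a1) a2 (- a2), B = Diag4 b1 b2 (- b1) (- b2)
       & C = Diag4 c1 c2 (- c2) (- c1)]) /\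
  (forall a1 a2 b1 b2 c1 c2 : R,
     A = Diag4 a1 (- a1) a2 (- a2) -> B = Diag4 b1 b2 (- b1) (- b2) ->
     C = Diag4 c1 c2 (- c2) (- c1) ->
     let t3 : lform R :=
       wedge (- (b1 + b2) *: om7b R + (a1 + a2) *: om1b R) (e2 R) +
       wedge ((c1 + c2) *: om7b R - (a1 - a2) *: om2b R) (e1 R) +
       wedge ((b1 - b2) *: om2b R - (c1 - c2) *: om1b R) (e7 R) in
     is_tau3 A B C t3 /\
     [/\          lap A B C (phi R) = dstar A B C (dd A B C (phi R)),
         lap A B C (psi R) = dd A B C t3,
         lap A B C (psi R) = hodge (lap A B C (phi R)),
         lap A B C (phi R) =
           ((b1 + b2) ^+ 2 + (c1 + c2) ^+ 2) *: wedge (om7 R) (e7 R) +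
           ((b1 - b2) ^+ 2 + (a1 - a2) ^+ 2) *: wedge (om2 R) (e2 R) +
           ((c1 - c2) ^+ 2 + (a1 + a2) ^+ 2) *: wedge (om1 R) (e1 R)
       & lap A B C (psi R) =
           ((b1 + b2) ^+ 2 + (c1 + c2) ^+ 2) *: wedge (om7 R) (e12 R) -
           ((b1 - b2) ^+ 2 + (a1 - a2) ^+ 2) *: wedge (om2 R) (e17 R) +
           ((c1 - c2) ^+ 2 + (a1 + a2) ^+ 2) *: wedge (om1 R) (e27 R)]).
Proof.
move=> dA dB dC _ _ _; split.
  split; first exact: dpsi_eq0_diag_shape.
  by case=> a1 [a2 [b1 [b2 [c1 [c2 [-> -> ->]]]]]]; exact: dpsi_eq0.
move=> a1 a2 b1 b2 c1 c2 -> -> -> t3; split; first exact: tau3_is_tau3.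
split; [exact: lap_phi_dstar | exact: lap_psi_d_tau3 | exact: lap_psi_hodge
       | exact: lap_phiE | exact: lap_psiE].
Qed.
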